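(* Let $\mathcal{A}$ be a weighted pushdown system with state set $Q$ and stack alphabet $\Gamma$, and let $\pi$ be a finite path of $\mathcal{A}$ with additional stack height $\mathrm{ASH}(\pi) = d \geq (|Q|\cdot|\Gamma|)^2$. Then $\pi$ has a pumpable pair of paths.
   Context: A stack command over a finite alphabet $\Gamma$ is one of $\mathit{skip}$ (no change), $\mathit{pop}$ (delete top symbol), $\mathit{push}(z)$ for $z\in\Gamma$ (put $z$ on top). A weighted pushdown system (WPS) is $\mathcal{A}=\langle Q,\Gamma,q_0,E,w\rangle$ with finite state set $Q$, initial state $q_0\in Q$, finite stack alphabet $\Gamma$ containing a special bottom symbol $\bot$ that can be neither pushed nor popped, edge set $E\subseteq (Q\times\Gamma)\times(Q\times\mathrm{Com}(\Gamma))$ and integer weights $w:E\to\mathbb{Z}$. A configuration is a pair $(\alpha,q)$ with $\alpha\in\Gamma^+$ a stack string (top is the last symbol) and $q\in Q$; the initial configuration is $(\bot,q_0)$. $(\alpha',q')$ is a successor of $(\alpha,q)$ if there is an edge $(q,\gamma,q',\mathit{com})\in E$ with $\gamma$ the top symbol of $\alpha$ and $\alpha'=\mathit{com}(\alpha)$. A path is a (finite or infinite) sequence of configurations each of which is a successor of the previous one; equivalently it is a start configuration followed by the sequence of edges used. The stack height $\mathrm{SH}(\pi)$ of a finite path $\pi=\langle(\alpha_1,q_1),\dots,(\alpha_n,q_n)\rangle$ is $\max_i|\alpha_i|$, and its additional stack height is $\mathrm{ASH}(\pi)=\mathrm{SH}(\pi)-\max\{|\alpha_1|,|\alpha_n|\}$.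 For a path $\pi=\langle c_1 e_1 e_2\dots\rangle$, a pumpable pair is a pair $(p_1,p_2)$ of nonempty blocks of consecutive edges $p_1=e_{i_1}\dots e_{i_1+n_1}$, $p_2=e_{i_2}\dots e_{i_2+n_2}$ with $i_2>i_1+n_1$, such that for every $j\geq 0$ the sequence obtained from $\pi$ by replacing $p_1$ by $p_1^j$ and $p_2$ by $p_2^j$ (denoted $\pi^j_{(p_1,p_2)}$) is again a valid path from $c_1$. *)

From HB Require Import structures.
From mathcomp Require Import all_boot all_order all_algebra.
Set Implicit Arguments. Unset Strict Implicit. Unset Printing Implicit Defensive.

Inductive com (G : Type) := Skip | Pop | Push of G.
Arguments Skip {G}. Arguments Pop {G}.

Definition edge (Q G : Type) : Type := (Q * G * Q * com G)%type.
Definition e_src {Q G : Type} (e : edge Q G) : Q := e.1.1.1.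
Definition e_top {Q G : Type} (e : edge Q G) : G := e.1.1.2.
Definition e_dst {Q G : Type} (e : edge Q G) : Q := e.1.2.
Definition e_com {Q G : Type} (e : edge Q G) : com G := e.2.

Record wps (Q G : finType) := WPS {
  q0 : Q;
  bot : G;
  E : pred (edge Q G);
  w : edge Q G -> int;
  no_push_bot : forall e, E e -> e_com e <> Push bot;
  no_pop_bot : forall e, E e -> e_top e = bot -> e_com e <> Pop
}.

(* Configurations: (stack, state); the top of the stack is the LAST symbol. *)
Definition config (Q G : Type) : Type := (seq G * Q)%type.

Definition com_apply {G : Type} (c : com G) (s : seq G) : seq G :=
  match c with
  | Skip => s
  | Pop => take (size s).-1 s
  | Push z => rcons s z
  end.

Definition next {Q G : Type} (c : config Q G) (e : edge Q G) : config Q G :=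
  (com_apply (e_com e) c.1, e_dst e).

Definition enabled {Q G : finType} (A : wps Q G) (c : config Q G) (e : edge Q G) : Prop :=
  E A e /\ c.2 = e_src e /\ (exists s, c.1 = rcons s (e_top e))
  /\ (next c e).1 <> [::].

Fixpoint is_path {Q G : finType} (A : wps Q G) (c : config Q G) (es : seq (edge Q G)) : Prop :=
  match es with
  | [::] => c.1 <> [::]
  | e :: es' => enabled A c e /\ is_path A (next c e) es'
  end.

Definition configs {Q G : Type} (c : config Q G) (es : seq (edge Q G)) : seq (config Q G) :=
  c :: scanl next c es.

Definition SH {Q G : Type} (c : config Q G) (es : seq (edge Q G)) : nat :=
  \max_(x <- configs c es) size x.1.

Definition ASH {Q G : Type} (c : config Q G) (es : seq (edge Q G)) : nat :=
  SH c es - maxn (size c.1) (size (last c (configs c es)).1).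

Definition pumpable_pair {Q G : finType} (A : wps Q G) (c : config Q G)
    (es p1 p2 : seq (edge Q G)) : Prop :=
  p1 <> [::] /\ p2 <> [::] /\
  exists u v x, es = u ++ p1 ++ v ++ p2 ++ x /\
    forall j : nat,
      is_path A c (u ++ flatten (nseq j p1) ++ v ++ flatten (nseq j p2) ++ x).

From HB Require Import structures.
From mathcomp Require Import all_boot all_order all_algebra.
From mathcomp Require Import zify.

(* A hill is a path that starts with a single symbol z on the stack in state q,
   never removes z, and ends with exactly z on the stack in state r; its profile is
   the triple (z, q, r).  Since a path only reads the top of the stack, a hill can be
   run on top of any stack (path_frame).  The proof has three parts.
   - Highest hill: a path starting and ending at height at most k but climbing above k
     contains a hill sitting on a stack of height k that accounts for all of its height
     above k (highest_hill).  Used inside a hill with k = 1, this shows that a hill of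
     height n+2 strictly contains a hill of height n+1 (inner_hill), so a hill of height
     n+1 starts a chain of n strictly nested hills (descending_chain).
   - Pigeonhole: a chain of more than |G|.|Q|^2 hills contains two nested hills with the
     same profile (repeated_profile).
   - Pumping: if a hill strictly contains a hill with the same profile, the climb U to
     the inner hill and the descent X back can both be repeated j times (pump_nested).
   For the theorem, the highest hill above the initial and final heights has height at
   least ASH >= |Q|^2.|G|^2 > |G|.|Q|^2, since a climbing path pushes a symbol other than
   the bottom one, so |G| >= 2. *)

Set Implicit Arguments. Unset Strict Implicit. Unset Printing Implicit Defensive.

Lemma com_apply_cat (T : Type) (cm : com T) (s t : seq T) :
  t <> [::] -> com_apply cm (s ++ t) = s ++ com_apply cm t.
Proof.
case: cm => //= [|z] tn; last by rewrite rcons_cat.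
have t_gt0 : 0 < size t by case: t tn.
rewrite size_cat take_cat ifF; last by apply/negbTE; rewrite -leqNgt; lia.
congr (_ ++ take _ t); lia.
Qed.

Lemma com_apply_grows (T : Type) (cm : com T) (s : seq T) :
  size s < size (com_apply cm s) -> exists z, cm = Push z /\ com_apply cm s = rcons s z.
Proof.
case: cm => [||z] /=; [by rewrite ltnn | | by exists z].
by rewrite size_take; case: ifP => _; lia.
Qed.

Lemma com_apply_bottom (T : Type) (cm : com T) (x : T) (t : seq T) :
  com_apply cm (x :: t) <> [::] -> exists t', com_apply cm (x :: t) = x :: t'.
Proof.
case: t => [|y t]; first by case: cm => [||z] /=; [exists [::] | | exists [:: z]].
by move=> _; rewrite -cat1s com_apply_cat //; eexists.
Qed.

Lemma flatten_nseqS (T : Type) (s : seq T) (j : nat) :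
  flatten (nseq j.+1 s) = flatten (nseq j s) ++ s.
Proof. by rewrite -flatten_rcons; congr flatten; elim: j => //= j ->. Qed.

Lemma rcons_suffix (T : Type) (s t s0 : seq T) (x : T) :
  t <> [::] -> s ++ t = rcons s0 x -> exists s1, t = rcons s1 x.
Proof.
case/lastP: t => [//|t1 a] _; rewrite -rcons_cat => /rcons_inj [_ ->].
by exists t1.
Qed.

Section StackHeight.
Variables Q G : Type.
Implicit Types (c : config Q G) (es : seq (edge Q G)).

Lemma SH_nil c : SH c [::] = size c.1.
Proof. by rewrite /SH /configs /= big_cons big_nil maxn0. Qed.

Lemma SH_cons c e es : SH c (e :: es) = maxn (size c.1) (SH (next c e) es).
Proof. by rewrite /SH /configs /= big_cons. Qed.

Lemma SH_ge c es : size c.1 <= SH c es.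
Proof. by case: es => [|e es]; rewrite ?SH_nil ?SH_cons ?leq_maxl. Qed.

Lemma SH_cat a b c : SH c (a ++ b) = maxn (SH c a) (SH (foldl next c a) b).
Proof.
elim: a c => [|e a IH] c /=; last by rewrite !SH_cons IH maxnA.
by rewrite SH_nil; apply/esym/maxn_idPr/SH_ge.
Qed.

Lemma last_configs c es : last c (configs c es) = foldl next c es.
Proof. by elim: es c => [|e es IH] c //=; rewrite -IH. Qed.

End StackHeight.

Section Paths.
Variables (Q G : finType) (A : wps Q G).
Implicit Types (c : config Q G) (es : seq (edge Q G)).

Lemma path_stack_nonempty c es : is_path A c es -> c.1 <> [::].
Proof. by case: es => [//|e es] /= [[_ [_ [[s ->] _]]] _]; case: s. Qed.

Lemma is_path_cat a b c :
  is_path A c (a ++ b) <-> is_path A c a /\ is_path A (foldl next c a) b.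
Proof.
elim: a c => [|e a IH] c /=; last by rewrite IH; tauto.
by split=> [hp | [] //]; split=> //; apply: path_stack_nonempty hp.
Qed.

Lemma path_end_nonempty c es : is_path A c es -> (foldl next c es).1 <> [::].
Proof. by move=> hp; have /is_path_cat [] : is_path A c (es ++ [::]) by rewrite cats0. Qed.

Lemma enabled_frame s t q e : enabled A (t, q) e ->
  enabled A (s ++ t, q) e /\ next (s ++ t, q) e = (s ++ (next (t, q) e).1, e_dst e).
Proof.
move=> [hE [hq [[s0 ht] hn]]].
have tn : t <> [::] by move: ht => /= ->; case: s0.
have hnext : next (s ++ t, q) e = (s ++ (next (t, q) e).1, e_dst e).
  by rewrite /next /= com_apply_cat.
split=> //; split=> //; split=> //; split.
  by exists (s ++ s0); move: ht => /= ->; rewrite rcons_cat.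
by rewrite hnext; case: (s).
Qed.

Lemma path_frame s es t q : is_path A (t, q) es ->
  is_path A (s ++ t, q) es /\
  foldl next (s ++ t, q) es = (s ++ (foldl next (t, q) es).1, (foldl next (t, q) es).2).
Proof.
elim: es t q => [|e es IH] t q /=; first by move=> tn; split=> //; case: s.
move=> [hen hp]; have [hen' ->] := enabled_frame s hen.
by have [IH1 IH2] := IH _ _ hp; split.
Qed.

Lemma SH_frame s es t q : is_path A (t, q) es -> SH (s ++ t, q) es = size s + SH (t, q) es.
Proof.
elim: es t q => [|e es IH] t q /=; first by rewrite !SH_nil size_cat.
move=> [hen hp]; have [_ hnext] := enabled_frame s hen.
by rewrite !SH_cons hnext (IH _ _ hp) size_cat addn_maxr.
Qed.

Lemma path_keeps_bottom x t q es : is_path A (x :: t, q) es ->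
  exists t', (foldl next (x :: t, q) es).1 = x :: t'.
Proof.
elim: es t q => [|e es IH] t q /=; first by exists t.
move=> [[_ [_ [_ hn]]] hp]; have [t' ht'] := com_apply_bottom hn.
by move: hp; rewrite /next /= ht'; apply: IH.
Qed.

(* A path that climbs above its initial height pushes a symbol, which is not the
   bottom symbol: the stack alphabet has at least two letters. *)
Lemma climbing_two_symbols c es : is_path A c es -> size c.1 < SH c es -> 1 < #|G|.
Proof.
elim: es c => [|e es IH] c /=; first by rewrite SH_nil ltnn.
move=> [[hE _] hp]; rewrite SH_cons.
case: (ltnP (size c.1) (size (next c e).1)) => [/com_apply_grows [z [hz _]] _ | hle hlt].
  apply/card_gt1P; exists z, (bot A); split=> //; apply/eqP => zb.
  by apply: (no_push_bot hE); rewrite hz zb.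
by apply: IH hp _; lia.
Qed.

Lemma first_return s t q es : 0 < size t -> is_path A (s ++ t, q) es ->
  size (foldl next (s ++ t, q) es).1 <= size s ->
  exists es1 e es2 y r, es = es1 ++ e :: es2 /\ is_path A (t, q) es1 /\
    foldl next (t, q) es1 = ([:: y], r) /\ e_com e = Pop.
Proof.
elim: es t q => [|e es IH] t q t_gt0 /=.
  by move=> _; rewrite size_cat; case: t t_gt0 => //= ? ? _; lia.
have tn : t <> [::] by case: (t) t_gt0.
move=> [[hE [hq [[s0 hs] hn]]] hp] hend.
have hnext : next (s ++ t, q) e = (s ++ (next (t, q) e).1, e_dst e).
  by rewrite /next /= com_apply_cat.
rewrite hnext in hp hend.
case ht': (next (t, q) e).1 => [|y t'].
  move: ht'; rewrite /next /=; case hc: (e_com e) => [||z] //= ht; last by case: (t) ht.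
  have [y ->] : exists y, t = [:: y].
    by case: (t) tn ht => [//|y [|? ?]] //= _ _; exists y.
  by exists [::], e, es, y, q.
rewrite ht' in hp hend.
have [es1 [e2 [es2 [y' [r [Ees [hp1 [hf1 hpop]]]]]]]] := IH (y :: t') _ isT hp hend.
exists (e :: es1), e2, es2, y', r; rewrite Ees; split=> //; split=> //.
have [s1 ht] := rcons_suffix tn hs.
split; first by split; [|split; [|split; [exists s1 | rewrite ht']]].
  by move: hp1; rewrite -ht'.
by move: hf1; rewrite -ht'.
Qed.

End Paths.

Record hill (Q G : Type) := Hill { h_base : G; h_src : Q; h_edges : seq (edge Q G); h_dst : Q }.

Section Hills.
Variables (Q G : finType) (A : wps Q G).
Implicit Types (c : config Q G) (es : seq (edge Q G)) (h : hill Q G).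

Definition start h : config Q G := ([:: h_base h], h_src h).

Definition is_hill h : Prop :=
  is_path A (start h) (h_edges h) /\
  foldl next (start h) (h_edges h) = ([:: h_base h], h_dst h).

Definition height h : nat := SH (start h) (h_edges h).

Definition profile h : G * Q * Q := (h_base h, h_src h, h_dst h).

Definition occurs_at c es (u x : seq (edge Q G)) (b : seq G) h : Prop :=
  es = u ++ h_edges h ++ x /\ foldl next c u = (b ++ [:: h_base h], h_src h).

Definition nested h h' : Prop :=
  is_hill h' /\
  exists u x b, u <> [::] /\ x <> [::] /\ occurs_at (start h) (h_edges h) u x b h'.

Lemma occurs_end c es u x b h : is_hill h -> occurs_at c es u x b h ->
  foldl next c (u ++ h_edges h) = (b ++ [:: h_base h], h_dst h).
Proof.
move=> [hp hf] [_ fu]; have [_ hfr] := path_frame b hp.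
by rewrite foldl_cat fu hfr hf.
Qed.

Lemma occurs_trans c es u x b h U X g h' : is_hill h -> occurs_at c es u x b h ->
  occurs_at (start h) (h_edges h) U X g h' -> occurs_at c es (u ++ U) (X ++ x) (b ++ g) h'.
Proof.
move=> [hp _] [Ees fu] [Eh fU]; split; first by rewrite Ees Eh -!catA.
move: hp; rewrite Eh => /is_path_cat [hU _].
have [_ hfr] := path_frame b hU.
by rewrite foldl_cat fu hfr fU /= catA.
Qed.

Lemma nested_trans h1 h2 h3 : nested h1 h2 -> nested h2 h3 -> nested h1 h3.
Proof.
move=> [hh2 [u [x [b [nu [nx hocc]]]]]] [hh3 [U [X [g [nU [nX hocc']]]]]].
split=> //; exists (u ++ U), (X ++ x), (b ++ g).
split; first by case: (u) nu.
split; first by case: (X) nX.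
exact: occurs_trans hh2 hocc hocc'.
Qed.

Lemma push_then_return st q e es :
  is_path A (st, q) (e :: es) -> size st < size (next (st, q) e).1 ->
  size (foldl next (st, q) (e :: es)).1 <= size st ->
  exists h e' es', es = h_edges h ++ e' :: es' /\ is_hill h /\
    occurs_at (st, q) (e :: es) [:: e] (e' :: es') st h /\
    foldl next (st, q) (e :: h_edges h ++ [:: e']) = (st, e_dst e') /\
    SH (st, q) (e :: es) = maxn (size st + height h) (SH (st, e_dst e') es').
Proof.
move=> [hen hp] /com_apply_grows [z [_ hpush]] hend.
have hnext : next (st, q) e = (st ++ [:: z], e_dst e) by rewrite /next /= hpush cats1.
rewrite hnext in hp; rewrite /= hnext in hend.
have [es1 [e' [es' [y [r [Ees [hp1 [hf1 hpop]]]]]]]] :=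
  first_return (t := [:: z]) isT hp hend.
have [t' ht'] := path_keeps_bottom hp1; rewrite hf1 /= in ht'; case: ht' => yz _; subst y.
have [_ hfr] := path_frame st hp1; rewrite hf1 /= in hfr.
have hback : next (st ++ [:: z], r) e' = (st, e_dst e').
  by rewrite /next /= hpop /= size_cat addn1 take_size_cat.
exists (Hill z (e_dst e) es1 r), e', es'; split=> //; split; first by split.
split; first by split; [rewrite Ees | rewrite /= hnext].
split; first by rewrite /= hnext foldl_cat hfr /= hback.
rewrite SH_cons hnext Ees SH_cat hfr SH_cons hback (SH_frame st hp1) /= size_cat /=.
have := SH_ge ([:: z], e_dst e) es1; have := SH_ge (st, e_dst e') es'.
by rewrite /height /start /=; lia.
Qed.

Lemma highest_hill k es c : is_path A c es -> size c.1 <= k ->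
  size (foldl next c es).1 <= k -> k < SH c es ->
  exists u x b h, size b = k /\ occurs_at c es u x b h /\ is_hill h /\
    SH c es <= k + height h.
Proof.
have [n] := ubnP (size es); elim: n es c => // n IH [|e es] c /ltnSE hsz hp hc hend hk.
  by move: hk; rewrite SH_nil; lia.
rewrite SH_cons in hk.
case: (leqP (size (next c e).1) k) => hup.
  have hk' : k < SH (next c e) es by lia.
  have [u [x [b [h [hb [[Ees fu] [hh hSH]]]]]]] := IH es (next c e) hsz hp.2 hup hend hk'.
  exists (e :: u), x, b, h; split=> //; split; first by rewrite Ees.
  by split=> //; rewrite SH_cons; lia.
case: c hp hc hend hk hup => st q hp hc hend hk hup.
have grow : size st < size (next (st, q) e).1 := leq_ltn_trans hc hup.
have [z [_ hpush]] := com_apply_grows grow.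
have hst : size st = k by move: hc hup; rewrite /= hpush size_rcons; lia.
have hend_st : size (foldl next (st, q) (e :: es)).1 <= size st by rewrite hst.
have [h [e' [es' [Ees [hh [hocc [hret hSH]]]]]]] := push_then_return hp grow hend_st.
case: (leqP (SH (st, e_dst e') es') (k + height h)) => hlow.
  exists [:: e], (e' :: es'), st, h; rewrite hSH -hst.
  by split=> //; split=> //; split=> //; lia.
have Edec : e :: es = (e :: h_edges h ++ [:: e']) ++ es' by rewrite Ees /= -catA.
have hsz' : size es' < n by move: hsz; rewrite Ees /= size_cat /=; lia.
have hp' : is_path A (st, e_dst e') es'.
  by move: hp; rewrite Edec => /is_path_cat [_]; rewrite hret.
have hend' : size (foldl next (st, e_dst e') es').1 <= k.
  by move: hend; rewrite Edec foldl_cat hret.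
have hk' : k < SH (st, e_dst e') es' by lia.
have [u [x [b [h1 [hb [[Ees' fu] [hh1 hSH1]]]]]]] := IH es' _ hsz' hp' (eq_leq hst) hend' hk'.
exists ((e :: h_edges h ++ [:: e']) ++ u), x, b, h1; split=> //; split.
  by split; [rewrite Edec Ees' catA | rewrite foldl_cat hret].
by split=> //; rewrite hSH; lia.
Qed.

Lemma inner_hill h n : is_hill h -> n.+1 < height h -> exists h', nested h h' /\ n < height h'.
Proof.
move=> hh hn; have [hp hf] := hh.
have hend : size (foldl next (start h) (h_edges h)).1 <= 1 by rewrite hf.
have hk : 1 < SH (start h) (h_edges h) := leq_ltn_trans (ltn0Sn n) hn.
have [u [x [b [h' [hb [hocc [hh' hSH]]]]]]] := highest_hill hp (leqnn 1) hend hk.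
exists h'; split; last by move: hn hSH; rewrite /height; lia.
split=> //; exists u, x, b; split; last split=> //.
  move=> u0; case: hocc => _; rewrite u0 => -[/(congr1 size)].
  by rewrite size_cat hb.
move=> x0; move: hf; rewrite hocc.1 x0 cats0 (occurs_end hh' hocc).
by case=> /(congr1 size); rewrite size_cat hb.
Qed.

Fixpoint descending h (hs : seq (hill Q G)) : Prop :=
  if hs is h' :: hs' then nested h h' /\ descending h' hs' else True.

Lemma descending_chain n h : is_hill h -> n < height h ->
  exists hs, size hs = n /\ descending h hs.
Proof.
elim: n h => [|n IH] h hh hn; first by exists [::].
have [h' [hnest hn']] := inner_hill hh hn.
have [hs [hsz hd]] := IH h' hnest.1 hn'.
by exists (h' :: hs); rewrite /= hsz.
Qed.

Lemma descending_nested d h hs i j : descending h hs -> i < j <= size hs ->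
  nested (nth d (h :: hs) i) (nth d (h :: hs) j).
Proof.
elim: hs h i j => [|h' hs IH] h i [|j] //=; first by rewrite ltn0 andbF.
move=> [hd1 hd2] /andP [hij hj].
case: i hij => [_ | i hij] /=; last by rewrite ltnS in hij; apply: IH; rewrite ?hij.
case: j hj => [//| j hj] /=.
by apply: nested_trans hd1 (IH h' 0 j.+1 hd2 _).
Qed.

Lemma repeated_profile h hs : descending h hs -> #|{: G * Q * Q}| < size (h :: hs) ->
  exists h1 h2, (h1 = h \/ nested h h1) /\ nested h1 h2 /\ profile h2 = profile h1.
Proof.
move=> hd hsz.
have : ~~ uniq (map profile (h :: hs)).
  apply: contraTN hsz => /card_uniqP; rewrite size_map -leqNgt => <-.
  exact: max_card.
case/(uniqPn (profile h)) => i [j [hij hj]]; rewrite size_map in hj.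
rewrite !(nth_map h) ?(ltn_trans hij) // => heq.
have {}hj : j <= size hs := hj.
exists (nth h (h :: hs) i), (nth h (h :: hs) j).
have hnest : forall k, 0 < k <= size hs -> nested h (nth h (h :: hs) k).
  by move=> k; apply: (descending_nested h hd (i := 0)).
split.
  case: i hij {heq} => [|i] hij; [by left | right].
  by apply: hnest; rewrite (ltnW (leq_trans hij hj)).
by split; [apply: descending_nested hd _; rewrite hij | rewrite heq].
Qed.

Lemma iterate_climb t q U g j b :
  is_path A (t, q) U -> foldl next (t, q) U = (g ++ t, q) ->
  is_path A (b ++ t, q) (flatten (nseq j U)) /\
  foldl next (b ++ t, q) (flatten (nseq j U)) = (b ++ flatten (nseq j g) ++ t, q).
Proof.
move=> hU fU; have tn := path_stack_nonempty hU.
elim: j b => [|j IH] b /=; first by split=> //; case: (b).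
have [p1 f1] := path_frame b hU; rewrite fU /= in f1.
have [p2 f2] := IH (b ++ g); rewrite -catA in p2 f2.
split; first by apply/is_path_cat; rewrite f1.
by rewrite foldl_cat f1 f2 -!catA.
Qed.

Lemma iterate_descend t r X g j b :
  is_path A (g ++ t, r) X -> foldl next (g ++ t, r) X = (t, r) ->
  is_path A (b ++ flatten (nseq j g) ++ t, r) (flatten (nseq j X)) /\
  foldl next (b ++ flatten (nseq j g) ++ t, r) (flatten (nseq j X)) = (b ++ t, r).
Proof.
move=> hX fX; have tn := path_end_nonempty hX; rewrite fX in tn.
elim: j b => [|j IH] b /=; first by split=> //; case: (b).
have gcomm : g ++ flatten (nseq j g) = flatten (nseq j g) ++ g by rewrite -flatten_nseqS.
have [p1 f1] := path_frame (b ++ flatten (nseq j g)) hX; rewrite fX /= -!catA in p1 f1.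
have [p2 f2] := IH b.
rewrite gcomm -!catA; split; first by apply/is_path_cat; rewrite f1.
by rewrite foldl_cat f1 f2.
Qed.

(* If an occurring hill h strictly contains a hill h' with the same profile, then the
   climb U from h to h' and the descent X back form a pumpable pair: U^j h' X^j is again
   a hill with the profile of h. *)
Lemma pump_nested c es u x b h h' : is_path A c es -> is_hill h -> occurs_at c es u x b h ->
  nested h h' -> profile h' = profile h -> exists p1 p2, pumpable_pair A c es p1 p2.
Proof.
move=> hp hh hocc [hh' [U [X [g [nU [nX hocc']]]]]] [zE qE rE].
have hend := occurs_end hh hocc; have hmid := occurs_end hh' hocc'.
case: hocc hocc' => Ees fu [Eh fU].
rewrite zE qE in fU; rewrite zE rE in hmid.
exists U, X; split=> //; split=> //; exists u, (h_edges h'), x.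
split; first by rewrite Ees Eh -!catA.
have [hu hx] : is_path A c u /\ is_path A (b ++ [:: h_base h], h_dst h) x.
  move: hp; rewrite Ees catA => /is_path_cat [/is_path_cat [hu _]].
  by rewrite hend.
have [hU hX] : is_path A (start h) U /\ is_path A (g ++ [:: h_base h], h_dst h) X.
  move: hh.1; rewrite Eh catA => /is_path_cat [/is_path_cat [hU _]].
  by rewrite hmid.
have fX : foldl next (g ++ [:: h_base h], h_dst h) X = ([:: h_base h], h_dst h).
  by move: hh.2; rewrite Eh catA foldl_cat hmid.
move=> j.
have [p1 f1] := iterate_climb j b hU fU.
have [p2 f2] := path_frame (b ++ flatten (nseq j g)) hh'.1.
have [p3 f3] := iterate_descend j b hX fX.
rewrite hh'.2 /= zE qE rE -!catA in p2 f2.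
apply/is_path_cat; split=> //; rewrite fu.
apply/is_path_cat; split=> //; rewrite f1.
apply/is_path_cat; split=> //; rewrite f2.
by apply/is_path_cat; split=> //; rewrite f3.
Qed.

End Hills.

Unset Implicit Arguments.

Theorem lemma1 (Q G : finType) (A : wps Q G) (c : config Q G) (es : seq (edge Q G)) :
  is_path A c es ->
  (#|Q| * #|G|) ^ 2 <= ASH c es ->
  exists p1 p2, pumpable_pair A c es p1 p2.
Proof.
move=> hp hASH.
set m := maxn (size c.1) (size (foldl next c es).1).
have ASHE : ASH c es = SH c es - m by rewrite /ASH last_configs.
have hQ : 0 < #|Q| by apply/card_gt0P; exists c.2.
have hG : 0 < #|G|.
  by case: c.1 (path_stack_nonempty hp) => [//|g0 _] _; apply/card_gt0P; exists g0.
have hm : m < SH c es by move: hASH; rewrite ASHE; nia.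
have hG2 : 1 < #|G| by apply: climbing_two_symbols hp _; rewrite /m in hm; lia.
have [u [x [b [h [_ [hocc [hh hSH]]]]]]] :=
  highest_hill hp (leq_maxl _ _) (leq_maxr _ _) hm.
have hheight : #|{: G * Q * Q}| < height h.
  by rewrite !card_prod; move: hASH; rewrite ASHE; nia.
have [hs [hsz hd]] := descending_chain hh hheight.
have hlong : #|{: G * Q * Q}| < size (h :: hs) by rewrite /= hsz.
have [h1 [h2 [h1h [hn hprof]]]] := repeated_profile hd hlong.
have [u1 [x1 [b1 [hocc1 hh1]]]] : exists u1 x1 b1, occurs_at c es u1 x1 b1 h1 /\ is_hill A h1.
  case: h1h => [-> | [hh1 [U [X [g [_ [_ hocc']]]]]]]; first by exists u, x, b.
  by exists (u ++ U), (X ++ x), (b ++ g); split=> //; apply: occurs_trans hh hocc hocc'.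
exact: pump_nested hp hh1 hocc1 hn hprof.
Qed.
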